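(* Two zero-mean nonsingular Gaussian reciprocal sequences over $[0,N]$ share the same reciprocal model if and only if they share the same reciprocal $CM_L$ model.
   Context: $[0,N]=(0,1,\ldots,N)$; $x=[x_0',\ldots,x_N']'$, $C=\mathrm{Cov}(x)$, $'$ denotes transpose. A sequence $[x_k]$ is reciprocal if for all $j<k<l$ in $[0,N]$ the conditional distribution of $x_k$ given $x_0,\ldots,x_j,x_l,\ldots,x_N$ equals that given $x_j,x_l$. Reciprocal model: a zero-mean nonsingular Gaussian reciprocal sequence obeys $R^0_kx_k-R^-_kx_{k-1}-R^+_kx_{k+1}=e^R_k$, $k\in[1,N-1]$, with $R^0_k=A_k$, $R^+_k=-B_k$, $R^-_k=-B_{k-1}'$, where $A_k$ is the $(k,k)$ block and $B_k$ the $(k,k+1)$ block of $C^{-1}$; two sequences share the same reciprocal model if these coefficients for $k\in[1,N-1]$ coincide. Reciprocal $CM_L$ model: a reciprocal sequence obeys $x_k=G_{k,k-1}x_{k-1}+G_{k,N}x_N+e_k$, $k\in[1,N-1]$, where $G_{k,k-1}x_{k-1}+G_{k,N}x_N=E[x_k\mid x_0,\ldots,x_{k-1},x_N]$ and $[e_k]$ is a zero-mean white Gaussian sequence with $G_k=\mathrm{Cov}(e_k)$; two sequences share the same reciprocal $CM_L$ model if the coefficients $G_{k,k-1},G_{k,N},G_k$, $k\in[1,N-1]$, coincide. *)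

From HB Require Import structures.
From mathcomp Require Import all_boot all_order all_algebra.
Set Implicit Arguments. Unset Strict Implicit. Unset Printing Implicit Defensive.
Import Order.TTheory GRing.Theory Num.Theory.
Local Open Scope ring_scope.

(* A zero-mean Gaussian sequence x_0,...,x_N with x_k in R^d is represented by
   its block covariance  Cb i j = Cov(x_i, x_j) = E[x_i x_j'] (a d x d block). *)
Section Defs.
Variables (R : realFieldType) (d N : nat).
Notation idx := 'I_N.+1.
Notation blk := 'M[R]_d.
Implicit Types (Cb : idx -> idx -> blk).

Definition covmx Cb : 'M[R]_(\sum_(i < N.+1) d, \sum_(j < N.+1) d) :=
  \mxblock_(i < N.+1, j < N.+1) Cb i j.

Definition nonsingular_gaussian_cov Cb : Prop :=
  (forall i j, Cb j i = (Cb i j)^T) /\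
  (forall v : 'rV[R]_(\sum_(i < N.+1) d), v != 0 -> 0 < (v *m covmx Cb *m v^T) 0 0).

(* Conditional law of x_k given x_S, for a zero-mean Gaussian sequence:
   it is the Gaussian law with mean  \sum_(i in S) H i x_i  (= E[x_k | x_S],
   characterised by orthogonality of the error to every x_m, m in S) and
   covariance Sig = Cov(x_k - \sum_(i in S) H i x_i). *)
Definition cond_law Cb (k : idx) (S : pred idx) (H : idx -> blk) (Sig : blk) : Prop :=
  [/\ (forall i, ~~ S i -> H i = 0),
      (forall m, S m -> Cb k m - \sum_(i | S i) H i *m Cb i m = 0) &
      Sig = Cb k k - \sum_i H i *m Cb i k - \sum_i Cb k i *m (H i)^T
            + \sum_i \sum_i' H i *m Cb i i' *m (H i')^T].

Definition outer_set (j l : idx) : pred idx := [pred i : idx | (i <= j)%N || (l <= i)%N].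
Definition pair_set (j l : idx) : pred idx := [pred i : idx | (i == j) || (i == l)].

Definition reciprocal Cb : Prop :=
  forall j k l : idx, (j < k < l)%N ->
    forall H Sig, cond_law Cb k (outer_set j l) H Sig <-> cond_law Cb k (pair_set j l) H Sig.

Definition Ablk Cb (k : nat) : blk :=
  submxblock (invmx (covmx Cb)) (inord k : idx) (inord k : idx).
Definition Bblk Cb (k : nat) : blk :=
  submxblock (invmx (covmx Cb)) (inord k : idx) (inord k.+1 : idx).

Definition R0 Cb k : blk := Ablk Cb k.
Definition Rplus Cb k : blk := - Bblk Cb k.
Definition Rminus Cb k : blk := - (Bblk Cb k.-1)^T.

Definition same_reciprocal_model Cb1 Cb2 : Prop :=
  forall k : nat, (1 <= k <= N.-1)%N ->
    [/\ R0 Cb1 k = R0 Cb2 k, Rplus Cb1 k = Rplus Cb2 k & Rminus Cb1 k = Rminus Cb2 k].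

(* reciprocal CM_L model: x_k = G1 x_{k-1} + G2 x_N + e_k with
   G1 x_{k-1} + G2 x_N = E[x_k | x_0..x_{k-1}, x_N] and Gk = Cov(e_k) *)
Definition CML_coeffs Cb (k : idx) (G1 G2 Gk : blk) : Prop :=
  cond_law Cb k [pred i : idx | (i < k)%N || (i == N :> nat)]
    (fun i : idx => if (i == k.-1 :> nat) then G1
                    else if (i == N :> nat) then G2 else 0) Gk.

Definition same_CML_model Cb1 Cb2 : Prop :=
  forall k : idx, (1 <= k <= N.-1)%N ->
    forall G1 G2 Gk, CML_coeffs Cb1 k G1 G2 Gk <-> CML_coeffs Cb2 k G1 G2 Gk.

End Defs.

From HB Require Import structures.
From mathcomp Require Import all_boot all_order all_algebra.
From mathcomp Require Import zify.
Set Implicit Arguments. Unset Strict Implicit. Unset Printing Implicit Defensive.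
Import Order.TTheory GRing.Theory Num.Theory.
Local Open Scope ring_scope.

(* Write P = C^-1. Reciprocity makes the regression of x_k on all the other
   x_i involve x_(k-1) and x_(k+1) only, so P is block tridiagonal and the
   reciprocal model is just the interior rows of P.  The CM_L innovations
   e_k = x_k - G_(k,k-1) x_(k-1) - G_(k,N) x_N (0 < k < N) are uncorrelated
   with each other and with x_0 and x_N; hence the interior rows of P are those
   of \sum_k E_k' G_k^-1 E_k, where e_k = E_k x, and conversely these rows
   determine the G's by back substitution.  So both models are descriptions of
   the interior rows of P, and the CM_L coefficients are unique by positive
   definiteness of C. *)

Section BlockCovariance.
Variables (R : realFieldType) (d N : nat).
Notation idx := 'I_N.+1.
Notation blk := 'M[R]_d.
Implicit Types (C : idx -> idx -> blk) (S : pred idx).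

(** * Covariances of linear combinations *)

Definition delta_blk (i j : idx) : blk := if i == j then 1%:M else 0.

Lemma trmx_delta_blk i j : (delta_blk i j)^T = delta_blk j i.
Proof. by rewrite /delta_blk eq_sym; case: eqP; rewrite ?trmx1 ?trmx0. Qed.

Lemma sum_delta_blk_mull p k (X : idx -> 'M[R]_(d, p)) :
  \sum_i delta_blk k i *m X i = X k.
Proof.
rewrite (bigD1 k) //= big1 ?addr0 /delta_blk ?eqxx ?mul1mx // => i /negbTE.
by rewrite eq_sym => ->; rewrite mul0mx.
Qed.

Lemma sum_mul_delta_blk p k (X : idx -> 'M[R]_(p, d)) :
  \sum_i X i *m delta_blk i k = X k.
Proof.
rewrite (bigD1 k) //= big1 ?addr0 /delta_blk ?eqxx ?mulmx1 // => i /negbTE ->.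
by rewrite mulmx0.
Qed.

Lemma sum_mul_tr_delta_blk p k (X : idx -> 'M[R]_(p, d)) :
  \sum_i X i *m (delta_blk k i)^T = X k.
Proof. by under eq_bigr do rewrite trmx_delta_blk; rewrite sum_mul_delta_blk. Qed.

(* [cov_comb_x C a m] and [cov_comb C a b] are Cov(a x, x_m) and Cov(a x, b x),
   where a x stands for \sum_i a_i x_i. *)
Definition cov_comb_x p C (a : idx -> 'M[R]_(p, d)) (m : idx) : 'M[R]_(p, d) :=
  \sum_i a i *m C i m.

Definition cov_comb p q C (a : idx -> 'M[R]_(p, d)) (b : idx -> 'M[R]_(q, d)) :
  'M[R]_(p, q) := \sum_m cov_comb_x C a m *m (b m)^T.

Lemma cov_comb_xB p C (a b : idx -> 'M[R]_(p, d)) m :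
  cov_comb_x C (fun i => a i - b i) m = cov_comb_x C a m - cov_comb_x C b m.
Proof. by rewrite /cov_comb_x -sumrB; apply: eq_bigr => i _; rewrite mulmxBl. Qed.

Lemma cov_comb_x_delta C k m : cov_comb_x C (delta_blk k) m = C k m.
Proof. exact: sum_delta_blk_mull. Qed.

Lemma mul_mxrow_covmx p q C (a : idx -> 'M[R]_(p, d)) (b : idx -> 'M[R]_(q, d)) :
  (\mxrow_i a i) *m covmx C *m (\mxrow_i b i)^T = cov_comb C a b.
Proof. by rewrite /covmx mul_mxrow_mxblock tr_mxrow mul_mxrow_mxcol. Qed.

Lemma mulmx_cov_comb_x_sum p q r C (X : 'M[R]_(r, p)) (a : idx -> 'M[R]_(p, d))
    (b : idx -> 'M[R]_(q, d)) :
  \sum_m X *m cov_comb_x C a m *m (b m)^T = X *m cov_comb C a b.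
Proof. by rewrite /cov_comb mulmx_sumr; apply: eq_bigr => m _; rewrite mulmxA. Qed.

Lemma mulmx_cov_comb C (a : 'rV[R]_d) (e : idx -> blk) :
  a *m cov_comb C e e *m a^T = cov_comb C (fun i => a *m e i) (fun i => a *m e i).
Proof.
rewrite /cov_comb (mulmx_sumr a) mulmx_suml; apply: eq_bigr => m _.
rewrite /cov_comb_x trmx_mul !mulmxA mulmx_sumr; congr (_ *m _ *m _).
by apply: eq_bigr => i _; rewrite mulmxA.
Qed.

Definition symmetric_cov C := forall i j, C j i = (C i j)^T.

Lemma trmx_cov_comb C (a b : idx -> blk) :
  symmetric_cov C -> (cov_comb C a b)^T = cov_comb C b a.
Proof.
move=> symC; rewrite /cov_comb /cov_comb_x raddf_sum /=.
under eq_bigr do rewrite trmx_mul trmxK raddf_sum /= mulmx_sumr.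
under [RHS]eq_bigr do rewrite mulmx_suml.
rewrite exchange_big /=; apply: eq_bigr => i _; apply: eq_bigr => m _.
by rewrite trmx_mul symC trmxK mulmxA.
Qed.

Definition posdef_cov C :=
  forall w : idx -> 'rV[R]_d, (exists i, w i != 0) -> 0 < cov_comb C w w 0 0.

Lemma nonsingular_gaussian_posdef C :
  nonsingular_gaussian_cov C -> symmetric_cov C /\ posdef_cov C.
Proof.
move=> [symC pdC]; split=> // w [i wi]; rewrite -mul_mxrow_covmx; apply: pdC.
by apply: contra wi => /eqP w0; rewrite -(mxrowK w i) w0 submxrow0.
Qed.

Lemma mxrow_neq0 (v : 'rV[R]_(\sum_(i < N.+1) d)) :
  v != 0 -> exists i, submxrow v i != 0.
Proof.
move=> v0; apply/existsP; apply: contraR v0; rewrite negb_exists => /forallP w0.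
rewrite -(submxrowK v); apply/eqP/mxrowP => j.
by rewrite mxrowK submxrow0; apply/eqP; rewrite -[_ == _]negbK.
Qed.

Lemma posdef_cov_unitmx C : posdef_cov C -> covmx C \in unitmx.
Proof.
move=> pdC; rewrite unitmxE unitfE; apply/negP => /det0P [v /mxrow_neq0 v0 vC].
have := pdC _ v0; rewrite -mul_mxrow_covmx submxrowK vC mul0mx mxE.
by rewrite ltxx.
Qed.

Lemma cov_comb_ge0 C (w : idx -> 'rV[R]_d) :
  posdef_cov C -> 0 <= cov_comb C w w 0 0.
Proof.
move=> pdC; have [/existsP [i wi]|] := boolP [exists i, w i != 0].
  by apply/ltW/pdC; exists i.
rewrite negb_exists => /forallP w0.
rewrite /cov_comb big1 ?mxE // => m _.
by move/negPn/eqP: (w0 m) => ->; rewrite trmx0 mulmx0.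
Qed.

Lemma orth_support_eq0 C S (D : idx -> blk) : posdef_cov C ->
  (forall i, ~~ S i -> D i = 0) -> (forall m, S m -> cov_comb_x C D m = 0) ->
  forall i, D i = 0.
Proof.
move=> pdC D0 DS.
have DD0 : cov_comb C D D = 0.
  rewrite /cov_comb big1 // => m _; have [Sm|nSm] := boolP (S m).
    by rewrite DS // mul0mx.
  by rewrite D0 // trmx0 mulmx0.
suff aD0 (a : 'rV[R]_d) i : a *m D i = 0.
  by move=> i; apply/row_matrixP => r; rewrite rowE aD0 row0.
apply/eqP/negPn/negP => aDi.
have := pdC (fun i => a *m D i) (ex_intro _ i aDi).
by rewrite -mulmx_cov_comb DD0 mulmx0 mul0mx mxE ltxx.
Qed.

Definition prec C (i j : idx) : blk := submxblock (invmx (covmx C)) i j.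

Lemma sum_mul_block_eq1 (X Y : idx -> idx -> blk) :
  \mxblock_(i, j) X i j *m \mxblock_(i, j) Y i j = 1%:M ->
  forall i l, \sum_j X i j *m Y j l = delta_blk i l.
Proof.
move=> XY1 i l; rewrite mul_mxblock in XY1.
have := congr1 (fun M => submxblock M i l) XY1.
rewrite mxblockK -(mxdiagZ (p_ := fun _ : idx => d) 1) mxblockK => ->.
by rewrite /delta_blk; case: eqP => // _; rewrite conform_mx_id.
Qed.

Lemma prec_mulmx C : posdef_cov C ->
  forall i l, \sum_j prec C i j *m C j l = delta_blk i l.
Proof.
move=> pdC; apply: sum_mul_block_eq1.
by rewrite /prec submxblockK mulVmx // posdef_cov_unitmx.
Qed.

Lemma mulmx_prec C : posdef_cov C ->
  forall i l, \sum_j C i j *m prec C j l = delta_blk i l.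
Proof.
move=> pdC; apply: sum_mul_block_eq1.
by rewrite /prec submxblockK mulmxV // posdef_cov_unitmx.
Qed.

Lemma trmx_prec C : symmetric_cov C -> forall i j, prec C j i = (prec C i j)^T.
Proof.
move=> symC i j; rewrite /prec tr_submxblock trmx_inv /covmx tr_mxblock.
by congr (submxblock (invmx _) _ _); apply: eq_mxblock => a b; rewrite (symC a b) trmxK.
Qed.

(** * Regression *)

Lemma mulmx_tr_ge0 (w : 'rV[R]_d) : 0 <= (w *m w^T) 0 0.
Proof. by rewrite mxE; apply: sumr_ge0 => j _; rewrite mxE -expr2 sqr_ge0. Qed.

Lemma mulmx_tr_gt0 (w : 'rV[R]_d) : w != 0 -> 0 < (w *m w^T) 0 0.
Proof.
move=> w0; have [j wj] : exists j, w 0 j != 0.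
  apply/existsP; apply: contraR w0; rewrite negb_exists => /forallP w0.
  by apply/eqP/rowP => j; rewrite mxE; apply/eqP; rewrite -[_ == _]negbK.
rewrite mxE (bigD1 j) //= mxE -expr2 ltr_pwDl //.
  by rewrite exprn_even_gt0 ?wj ?orbT.
by apply: sumr_ge0 => i _; rewrite mxE -expr2 sqr_ge0.
Qed.

(* The covariance of (x_i)_{i in S} completed by independent standard
   components elsewhere; its inverse yields the regression on x_S. *)
Definition restrict_cov C S : idx -> idx -> blk :=
  fun i m => if S i && S m then C i m else delta_blk i m.

Lemma cov_comb_x_restrict p C S (w : idx -> 'M[R]_(p, d)) m :
  cov_comb_x (restrict_cov C S) w m =
  if S m then cov_comb_x C (fun i => if S i then w i else 0) m else w m.
Proof.
rewrite /cov_comb_x /restrict_cov; have [Sm|nSm] := boolP (S m); last first.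
  by rewrite -[RHS](sum_mul_delta_blk m w); apply: eq_bigr => i _; rewrite andbF.
apply: eq_bigr => i _; rewrite andbT; have [//|nSi] := boolP (S i).
rewrite /delta_blk; case: eqP => [eim|_]; last by rewrite mulmx0 mul0mx.
by rewrite eim Sm in nSi.
Qed.

Lemma posdef_restrict_cov C S : posdef_cov C -> posdef_cov (restrict_cov C S).
Proof.
move=> pdC w [i wi]; set v := fun i => if S i then w i else 0.
have -> : cov_comb (restrict_cov C S) w w =
    cov_comb C v v + \sum_m (if S m then 0 else w m *m (w m)^T).
  rewrite /cov_comb -big_split /=; apply: eq_bigr => m _.
  by rewrite cov_comb_x_restrict /v; case: (S m); rewrite ?addr0 ?trmx0 ?mulmx0 ?add0r.
have outS_ge0 m : 0 <= (if S m then 0 else w m *m (w m)^T) 0 0.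
  by case: (S m); [rewrite mxE | exact: mulmx_tr_ge0].
rewrite mxE [X in _ + X]summxE; have [/existsP [j vj]|] := boolP [exists j, v j != 0].
  by rewrite ltr_pwDl ?sumr_ge0 // pdC //; exists j.
rewrite negb_exists => /forallP v0.
have nSi : ~~ S i by apply: contra (v0 i) => Si; rewrite /v Si.
rewrite ltr_wpDl ?cov_comb_ge0 // (bigD1 i) //= ltr_pwDl ?sumr_ge0 //.
by rewrite (negbTE nSi) mulmx_tr_gt0.
Qed.

Definition cond_cov C k (H : idx -> blk) : blk :=
  C k k - \sum_i H i *m C i k - \sum_i C k i *m (H i)^T
  + \sum_i \sum_i' H i *m C i i' *m (H i')^T.

Lemma cond_covE C k H :
  cond_cov C k H = cov_comb C (fun i => delta_blk k i - H i) (fun i => delta_blk k i - H i).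
Proof.
rewrite /cov_comb; under eq_bigr do rewrite cov_comb_xB cov_comb_x_delta raddfB /= mulmxBr.
rewrite sumrB sum_mul_tr_delta_blk.
under [X in _ - X]eq_bigr do rewrite mulmxBl mulmx_suml.
by rewrite sumrB opprB exchange_big /cond_cov addrA addrAC.
Qed.

Lemma exists_cond_law C k S : posdef_cov C ->
  exists H, cond_law C k S H (cond_cov C k H).
Proof.
move=> pdC; set CS := restrict_cov C S.
have precCS := prec_mulmx (posdef_restrict_cov S pdC).
pose r m := if S m then C k m else 0.
pose H i := \sum_m r m *m prec CS m i.
have HCS l : cov_comb_x CS H l = r l.
  rewrite /cov_comb_x /H; under eq_bigr do rewrite mulmx_suml.
  rewrite exchange_big /= -[RHS](sum_mul_delta_blk l r); apply: eq_bigr => m _.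
  by rewrite -precCS mulmx_sumr; apply: eq_bigr => i _; rewrite mulmxA.
have HC i : cov_comb_x CS H i =
    if S i then \sum_(j | S j) H j *m C j i else H i.
  rewrite /CS cov_comb_x_restrict; case: (S i) => //.
  rewrite /cov_comb_x [RHS]big_mkcond; apply: eq_bigr => j _.
  by case: (S j); rewrite ?mul0mx.
exists H; split=> [i nSi|m Sm|//].
  by have := HCS i; rewrite HC /r (negbTE nSi).
by have := HCS m; rewrite HC /r Sm => ->; rewrite subrr.
Qed.

Lemma cond_law_ext C k S S' (H H' : idx -> blk) Sig :
  S =1 S' -> H =1 H' -> cond_law C k S H Sig -> cond_law C k S' H' Sig.
Proof.
move=> eqS eqH [H0 HS ->]; split.
- by move=> i; rewrite -eqS -eqH; exact: H0.
- move=> m; rewrite -eqS => Sm; rewrite -[RHS](HS m Sm); congr (_ - _).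
  by apply: eq_big => i; rewrite ?eqS ?eqH.
- by congr (_ - _ - _ + _); do !(apply: eq_bigr => ? _); rewrite !eqH.
Qed.

(** * Reciprocity and the precision matrix *)

Definition interior (k : idx) := (0 < k < N)%N.

Lemma interiorE k : interior k = (1 <= k <= N.-1)%N.
Proof. by rewrite /interior; have := ltn_ord k; lia. Qed.

Definition prev_idx (k : idx) : idx := inord k.-1.

Lemma prev_idxE k : (prev_idx k : nat) = k.-1.
Proof. by rewrite inordK // (leq_ltn_trans (leq_pred _) (ltn_ord k)). Qed.

Lemma prec_row_regression C k H Sig : posdef_cov C ->
  cond_law C k (predC1 k) H Sig ->
  forall i, prec C k i = prec C k k *m (delta_blk k i - H i).
Proof.
move=> pdC [H0 HS _]; have Hk : H k = 0 by apply: H0; rewrite /= negbK.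
suff D0 : forall i, prec C k i - prec C k k *m (delta_blk k i - H i) = 0.
  by move=> i; apply/eqP; rewrite -subr_eq0 D0.
apply: (orth_support_eq0 (S := predC1 k) pdC) => [i|m km].
  by rewrite negbK => /eqP ->; rewrite /delta_blk eqxx Hk subr0 mulmx1 subrr.
have res0 : cov_comb_x C (fun i => delta_blk k i - H i) m = 0.
  rewrite cov_comb_xB cov_comb_x_delta -[RHS](HS m km); congr (_ - _).
  rewrite /cov_comb_x (bigID (predC1 k)) /= [X in _ + X]big1 ?addr0 // => i.
  by rewrite negbK => /eqP ->; rewrite Hk mul0mx.
rewrite cov_comb_xB /cov_comb_x; under [X in _ - X]eq_bigr do rewrite -mulmxA.
rewrite -mulmx_sumr prec_mulmx // -/(cov_comb_x C _ m) res0 mulmx0 subr0 /delta_blk.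
by rewrite eq_sym (negbTE km).
Qed.

Lemma prec_tridiag C k (j : idx) : posdef_cov C -> reciprocal C -> interior k ->
  (j != k.-1 :> nat) -> j != k -> (j != k.+1 :> nat) -> prec C k j = 0.
Proof.
move=> pdC recC /andP [k0 kN] j1 jk j3.
pose next : idx := inord k.+1.
have nextE : (next : nat) = k.+1 by rewrite inordK.
have [H lawH] := exists_cond_law k (outer_set (prev_idx k) next) pdC.
have ordk : (prev_idx k < k < next)%N by rewrite prev_idxE nextE; lia.
have [Hpair _ _] := (recC _ _ _ ordk H _).1 lawH.
have lawC1 : cond_law C k (predC1 k) H (cond_cov C k H).
  apply: cond_law_ext lawH => // i.
  by rewrite /outer_set /= prev_idxE nextE -val_eqE /=; lia.
rewrite (prec_row_regression pdC lawC1) /delta_blk eq_sym (negbTE jk) Hpair.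
  by rewrite subrr mulmx0.
by rewrite /pair_set /= -!val_eqE /= prev_idxE nextE negb_or j1 j3.
Qed.

(** * The reciprocal CM_L model *)

Definition cml_set (k : idx) : pred idx := [pred i : idx | (i < k)%N || (i == N :> nat)].

Definition cml_coef (g1 g2 : blk) (k : idx) : idx -> blk :=
  fun i => if (i == k.-1 :> nat) then g1 else if (i == N :> nat) then g2 else 0.

(* [innov g1 g2 k] encodes e_k = x_k - g1 x_(k-1) - g2 x_N. *)
Definition innov (g1 g2 : blk) (k : idx) : idx -> blk :=
  fun i => delta_blk k i - cml_coef g1 g2 k i.

Lemma cml_coef_out g1 g2 k i : interior k -> ~~ cml_set k i -> cml_coef g1 g2 k i = 0.
Proof.
case/andP => k0 _; rewrite /cml_set /= negb_or => /andP [ik iN].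
by rewrite /cml_coef (negbTE iN); case: eqP => // e; rewrite e ltn_predL k0 in ik.
Qed.

Lemma innov_diag g1 g2 k : interior k -> innov g1 g2 k k = 1%:M.
Proof.
case/andP => k0 kN; rewrite /innov /delta_blk eqxx /cml_coef.
have -> : (k == k.-1 :> nat) = false by lia.
by rewrite (ltn_eqF kN) subr0.
Qed.

Lemma innov_offdiag g1 g2 (k i : idx) : (i < N)%N -> i != k ->
  innov g1 g2 k i = if (i == k.-1 :> nat) then - g1 else 0.
Proof.
move=> iN ik; rewrite /innov /delta_blk eq_sym (negbTE ik) sub0r /cml_coef.
by rewrite (ltn_eqF iN); case: eqP; rewrite ?oppr0.
Qed.

Lemma cml_coefE g1 g2 k m : interior k -> cml_coef g1 g2 k m =
  (if m == prev_idx k then g1 else 0) + (if m == ord_max then g2 else 0).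
Proof.
case/andP => _ kN; rewrite /cml_coef -!val_eqE /= prev_idxE.
case: eqP => [->|_]; last by rewrite add0r.
by rewrite (ltn_eqF (leq_ltn_trans (leq_pred _) kN)) addr0.
Qed.

Lemma sum_mul_tr_pred1 p q (X : idx -> 'M[R]_(p, d)) (g : 'M[R]_(q, d)) j :
  \sum_m X m *m (if m == j then g else 0)^T = X j *m g^T.
Proof.
rewrite (bigD1 j) //= eqxx big1 ?addr0 // => m /negbTE ->.
by rewrite trmx0 mulmx0.
Qed.

Lemma cov_comb_innov p C (a : idx -> 'M[R]_(p, d)) g1 g2 k : interior k ->
  cov_comb C a (innov g1 g2 k) = cov_comb_x C a k
    - cov_comb_x C a (prev_idx k) *m g1^T - cov_comb_x C a ord_max *m g2^T.
Proof.
move=> kI; rewrite /cov_comb /innov.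
under eq_bigr do rewrite raddfB /= mulmxBr cml_coefE // raddfD /= mulmxDr.
by rewrite sumrB big_split /= sum_mul_tr_delta_blk !sum_mul_tr_pred1 opprD addrA.
Qed.

Lemma CML_coeffsE C k g1 g2 gk : interior k ->
  CML_coeffs C k g1 g2 gk <->
  (forall m, cml_set k m -> cov_comb_x C (innov g1 g2 k) m = 0) /\
  gk = cov_comb C (innov g1 g2 k) (innov g1 g2 k).
Proof.
move=> kI; rewrite /CML_coeffs -/(cml_set k) -/(cml_coef g1 g2 k).
have sum_cml m : \sum_(i | cml_set k i) cml_coef g1 g2 k i *m C i m =
    cov_comb_x C (cml_coef g1 g2 k) m.
  rewrite /cov_comb_x [RHS](bigID (cml_set k)) /= [X in _ + X]big1 ?addr0 // => i.
  by move=> /(cml_coef_out g1 g2 kI) ->; rewrite mul0mx.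
have innovE m : cov_comb_x C (innov g1 g2 k) m =
    C k m - \sum_(i | cml_set k i) cml_coef g1 g2 k i *m C i m.
  by rewrite sum_cml cov_comb_xB cov_comb_x_delta.
split=> [[_ orth ->]|[orth ->]].
  by split=> [m /orth <-|]; [exact: innovE | exact: cond_covE].
split=> [i|m mS|]; first exact: cml_coef_out.
  by rewrite -innovE orth.
exact: esym (cond_covE _ _ _).
Qed.

Lemma exists_CML_coeffs C k : posdef_cov C -> reciprocal C -> interior k ->
  exists g1 g2 gk, CML_coeffs C k g1 g2 gk.
Proof.
move=> pdC recC kI; have /andP [k0 kN] := kI.
have [H lawH] := exists_cond_law k (outer_set (prev_idx k) ord_max) pdC.
have ordk : (prev_idx k < k < @ord_max N)%N by rewrite prev_idxE /=; lia.
have [Hpair _ _] := (recC _ _ _ ordk H _).1 lawH.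
exists (H (prev_idx k)), (H ord_max), (cond_cov C k H).
apply: cond_law_ext lawH => [i|i].
  by rewrite /outer_set /cml_set /= prev_idxE; have := ltn_ord i; lia.
rewrite /cml_coef; case: eqP => [e|ne].
  by congr H; apply: val_inj; rewrite /= prev_idxE.
case: eqP => [e|ne2]; first by congr H; apply: val_inj.
apply: Hpair; rewrite /pair_set /= negb_or -!val_eqE /= prev_idxE.
by apply/andP; split; apply/eqP.
Qed.

Lemma CML_coeffs_uniq C k g1 g2 gk g1' g2' gk' : posdef_cov C -> interior k ->
  CML_coeffs C k g1 g2 gk -> CML_coeffs C k g1' g2' gk' ->
  [/\ g1 = g1', g2 = g2' & gk = gk'].
Proof.
move=> pdC kI /(CML_coeffsE _ _ _ _ kI) [orth ->] /(CML_coeffsE _ _ _ _ kI) [orth' ->].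
have innov_eq : forall i, innov g1 g2 k i - innov g1' g2' k i = 0.
  apply: (orth_support_eq0 (S := cml_set k) pdC) => [i iS|m mS].
    by rewrite /innov !cml_coef_out // subrr.
  by rewrite cov_comb_xB orth // orth' // subrr.
have /andP [_ kN] := kI.
have e1 : g1 = g1'.
  have /eqP := innov_eq (prev_idx k).
  by rewrite /innov /cml_coef prev_idxE eqxx subr_eq0 => /eqP /addrI /oppr_inj.
have e2 : g2 = g2'.
  have /eqP := innov_eq ord_max; rewrite /innov /cml_coef /=.
  have -> : (N == k.-1) = false by lia.
  by rewrite eqxx subr_eq0 => /eqP /addrI /oppr_inj.
by rewrite e1 e2.
Qed.

Section CMLModel.
Variables g1 g2 gk : idx -> blk.
Local Notation E l := (innov (g1 l) (g2 l) l).

Definition CML_model C := forall l, interior l -> CML_coeffs C l (g1 l) (g2 l) (gk l).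

Definition prec_of_CML (i j : idx) : blk :=
  \sum_(l | interior l) (E l i)^T *m invmx (gk l) *m E l j.

Lemma trmx_prec_of_CML : (forall l, interior l -> (gk l)^T = gk l) ->
  forall i j, (prec_of_CML i j)^T = prec_of_CML j i.
Proof.
move=> gk_sym i j; rewrite /prec_of_CML raddf_sum /=; apply: eq_bigr => l lI.
by rewrite !trmx_mul trmxK trmx_inv gk_sym // mulmxA.
Qed.

(* x_0, e_1, ..., e_(N-1), x_N span the same space as x_0, ..., x_N. *)
Lemma cov_comb_x_eq0_innov p C (f : idx -> 'M[R]_(p, d)) :
  (forall b, ~~ interior b -> cov_comb_x C f b = 0) ->
  (forall l, interior l -> cov_comb C f (E l) = 0) ->
  forall m, cov_comb_x C f m = 0.
Proof.
move=> f_bd f_innov.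
suff f_le n (m : idx) : (m <= n)%N -> cov_comb_x C f m = 0 by move=> m; apply: (f_le m).
elim: n m => [|n IH] m mn.
  by apply: f_bd; move: mn; rewrite /interior leqn0 => /eqP ->.
have [mI|] := boolP (interior m); last exact: f_bd.
have := f_innov m mI; rewrite cov_comb_innov // (IH (prev_idx m)); last first.
  by rewrite prev_idxE; move: mn; case: (m : nat).
by rewrite (f_bd ord_max) ?mul0mx ?subr0 // /interior /= ltnn andbF.
Qed.

(* Back substitution: on interior indices E_l l = 1 and E_l j = 0 unless j = l - 1. *)
Lemma innov_triangular p (a : idx -> 'M[R]_(p, d)) t :
  (forall j, interior j -> (t <= j)%N -> \sum_(l | interior l) a l *m E l j = 0) ->
  forall l, interior l -> (t <= l)%N -> a l = 0.
Proof.
move=> a_sum.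
suff a0 n l : interior l -> (t <= l)%N -> (N - l <= n)%N -> a l = 0.
  by move=> l lI tl; apply: (a0 N) => //; rewrite leq_subr.
elim: n l => [|n IH] l lI tl ln; first by move: lI ln; rewrite /interior; lia.
have := a_sum l lI tl; rewrite (bigD1 l) //= innov_diag // mulmx1 big1 ?addr0 //.
move=> l' /andP [l'I l'l]; have /andP [_ lN] := lI.
rewrite innov_offdiag // 1?eq_sym //; case: eqP => [e|_]; last by rewrite mulmx0.
by rewrite (IH l') ?mul0mx //; move: lI l'I tl ln e; rewrite /interior; lia.
Qed.

Section Innovations.
Variable C : idx -> idx -> blk.
Hypotheses (pdC : posdef_cov C) (symC : symmetric_cov C) (cmlC : CML_model C).

Lemma cov_innov_x l m : interior l -> cml_set l m -> cov_comb_x C (E l) m = 0.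
Proof. by move=> lI; have [orth _] := (CML_coeffsE _ _ _ _ lI).1 (cmlC lI); exact: orth. Qed.

Lemma cov_innov_self l : interior l -> cov_comb C (E l) (E l) = gk l.
Proof. by move=> lI; have [_ ->] := (CML_coeffsE _ _ _ _ lI).1 (cmlC lI). Qed.

Lemma cov_innov_lt k l : interior k -> interior l -> (l < k)%N ->
  cov_comb C (E k) (E l) = 0.
Proof.
move=> kI lI lk; rewrite cov_comb_innov // !cov_innov_x //= /cml_set /=.
- by rewrite !mul0mx !subr0.
- by rewrite eqxx orbT.
- by rewrite prev_idxE (leq_ltn_trans (leq_pred _) lk).
- by rewrite lk.
Qed.

Lemma cov_innov k l : interior k -> interior l ->
  cov_comb C (E k) (E l) = if k == l then gk l else 0.
Proof.
move=> kI lI; case: eqP => [->|/eqP kl]; first exact: cov_innov_self.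
have [lk|kl'|e] := ltngtP l k; first exact: cov_innov_lt.
  by rewrite -trmx_cov_comb // cov_innov_lt // trmx0.
by move: kl; rewrite -val_eqE /= e eqxx.
Qed.

Lemma CML_cov_unit_sym l : interior l -> gk l \in unitmx /\ (gk l)^T = gk l.
Proof.
move=> lI; split; last by rewrite -cov_innov_self // trmx_cov_comb.
rewrite unitmxE unitfE; apply/negP => /det0P [a a0 aG].
have aE : a *m E l l != 0 by rewrite innov_diag // mulmx1.
have := pdC (ex_intro (fun i => a *m E l i != 0) l aE).
by rewrite -mulmx_cov_comb cov_innov_self // aG mul0mx mxE ltxx.
Qed.

Lemma cov_comb_x_prec_of_CML k m :
  cov_comb_x C (prec_of_CML k) m =
  \sum_(l | interior l) (E l k)^T *m invmx (gk l) *m cov_comb_x C (E l) m.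
Proof.
rewrite /cov_comb_x /prec_of_CML; under eq_bigr do rewrite mulmx_suml.
rewrite exchange_big /=; apply: eq_bigr => l _.
by rewrite mulmx_sumr; apply: eq_bigr => j _; rewrite mulmxA.
Qed.

Lemma prec_CML k : interior k -> forall j, prec C k j = prec_of_CML k j.
Proof.
move=> kI; pose f j := prec C k j - prec_of_CML k j.
pose X l := (E l k)^T *m invmx (gk l).
have fC m : cov_comb_x C f m =
    delta_blk k m - \sum_(l | interior l) X l *m cov_comb_x C (E l) m.
  by rewrite cov_comb_xB cov_comb_x_prec_of_CML /cov_comb_x prec_mulmx.
have f_bd b : ~~ interior b -> cov_comb_x C f b = 0.
  move=> bB; rewrite fC big1 => [|l lI]; last first.
    rewrite cov_innov_x ?mulmx0 //; move: bB lI; rewrite /interior /cml_set /=.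
    by have := ltn_ord b; lia.
  by rewrite subr0 /delta_blk; case: eqP => // kb; rewrite -kb kI in bB.
have f_innov l : interior l -> cov_comb C f (E l) = 0.
  move=> lI; rewrite /cov_comb; under eq_bigr do rewrite fC mulmxBl mulmx_suml.
  rewrite sumrB sum_delta_blk_mull exchange_big /=.
  under eq_bigr => l' l'I do rewrite mulmx_cov_comb_x_sum cov_innov //.
  rewrite (bigD1 l) //= eqxx big1 => [|l' /andP [_ /negbTE ->]]; last by rewrite mulmx0.
  by rewrite addr0 -mulmxA mulVmx ?mulmx1 ?subrr //; case: (CML_cov_unit_sym lI).
suff f0 : forall j, f j = 0 by move=> j; apply/eqP; rewrite -subr_eq0 -/(f j) f0.
apply: (orth_support_eq0 (S := predT) pdC) => // m _.
exact: cov_comb_x_eq0_innov.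
Qed.

End Innovations.

Section PrecToCML.
Variable C : idx -> idx -> blk.
Hypotheses (pdC : posdef_cov C) (symC : symmetric_cov C).
Hypotheses (gk_unit : forall l, interior l -> gk l \in unitmx)
           (gk_sym : forall l, interior l -> (gk l)^T = gk l).
Hypothesis precC : forall i j, interior j -> prec C i j = prec_of_CML i j.

Lemma sum_cov_innov_x_prec m j : interior j ->
  \sum_(l | interior l) (cov_comb_x C (E l) m)^T *m invmx (gk l) *m E l j = delta_blk m j.
Proof.
move=> jI; rewrite -(mulmx_prec pdC m j).
under [RHS]eq_bigr => i _ do rewrite precC // /prec_of_CML mulmx_sumr.
rewrite exchange_big /=; apply: eq_bigr => l _.
rewrite /cov_comb_x raddf_sum /= !mulmx_suml; apply: eq_bigr => i _.
by rewrite trmx_mul -symC !mulmxA.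
Qed.

Lemma cov_innov_x_of_prec l (m : idx) : interior l -> (m < l)%N || (m == N :> nat) ->
  cov_comb_x C (E l) m = 0.
Proof.
move=> lI ml.
have cov_eq0 t : (forall j, interior j -> (t <= j)%N -> m != j) -> (t <= l)%N ->
    cov_comb_x C (E l) m = 0.
  move=> mj tl; apply: trmx_inj; rewrite trmx0 -(mulmxKV (gk_unit lI) (_^T)).
  pose a l := (cov_comb_x C (E l) m)^T *m invmx (gk l).
  rewrite -/(a l) (innov_triangular (a := a) (t := t)) //.
    by rewrite mul0mx.
  by move=> j jI tj; rewrite sum_cov_innov_x_prec // /delta_blk (negbTE (mj j jI tj)).
have /andP [l0 _] := lI.
case/orP: ml => [ml|/eqP mN]; [apply: (cov_eq0 m.+1) | apply: (cov_eq0 1%N)] => //.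
  by move=> j _ mj; rewrite -val_eqE /= neq_ltn mj.
by move=> j /andP [_ jN] _; rewrite -val_eqE /= mN neq_ltn jN orbT.
Qed.

Lemma cov_innov_x_self_of_prec l : interior l -> cov_comb_x C (E l) l = gk l.
Proof.
move=> lI; have := sum_cov_innov_x_prec l lI.
rewrite (bigD1 l) //= innov_diag // mulmx1 big1 ?addr0 => [|l' /andP [l'I l'l]].
  rewrite /delta_blk eqxx => cov_gk; apply: trmx_inj; rewrite gk_sym //.
  by rewrite -(mulmxKV (gk_unit lI) (_^T)) cov_gk mul1mx.
have /andP [_ lN] := lI; rewrite innov_offdiag // 1?eq_sym //.
case: eqP => [e|_]; last by rewrite mulmx0.
rewrite cov_innov_x_of_prec ?trmx0 ?mul0mx //.
by move: l'I e; rewrite /interior; lia.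
Qed.

Lemma CML_of_prec : CML_model C.
Proof.
move=> k kI; apply/CML_coeffsE => //; split=> [m|]; first exact: cov_innov_x_of_prec.
rewrite cov_comb_innov // cov_innov_x_self_of_prec //.
rewrite !cov_innov_x_of_prec ?mul0mx ?subr0 //=.
- by rewrite eqxx orbT.
- by rewrite prev_idxE ltn_predL; case/andP: kI => ->.
Qed.

End PrecToCML.

Lemma CML_modelE C : posdef_cov C -> symmetric_cov C ->
  (forall l, interior l -> gk l \in unitmx /\ (gk l)^T = gk l) ->
  CML_model C <-> forall k, interior k -> forall j, prec C k j = prec_of_CML k j.
Proof.
move=> pdC symC gk_ok; split=> [cmlC k kI|precC]; first exact: prec_CML.
apply: CML_of_prec => // [l /gk_ok [] // | l /gk_ok [] // | i j jI].
by rewrite (trmx_prec symC j i) precC // trmx_prec_of_CML // => l /gk_ok [].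
Qed.

End CMLModel.

Lemma exists_CML_model C : posdef_cov C -> reciprocal C ->
  exists g1 g2 gk, CML_model g1 g2 gk C.
Proof.
move=> pdC recC.
have /fin_all_exists [g gP] : forall k : idx, exists g : blk * blk * blk,
    interior k -> CML_coeffs C k g.1.1 g.1.2 g.2.
  move=> k; have [kI|_] := boolP (interior k); last by exists (0, 0, 0).
  by have [g1 [g2 [gk cml]]] := exists_CML_coeffs pdC recC kI; exists (g1, g2, gk).
by exists (fun k => (g k).1.1), (fun k => (g k).1.2), (fun k => (g k).2).
Qed.

Lemma same_CML_modelE g1 g2 gk C1 C2 : posdef_cov C1 -> posdef_cov C2 ->
  CML_model g1 g2 gk C1 -> (same_CML_model C1 C2 <-> CML_model g1 g2 gk C2).
Proof.
move=> pd1 pd2 cml1; split=> [same l lI|cml2 k].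
  by apply/(same l); [rewrite -interiorE | exact: cml1].
rewrite -interiorE => kI G1 G2 Gk; split=> cml.
  by have [-> -> ->] := CML_coeffs_uniq pd1 kI cml (cml1 k kI); exact: cml2.
by have [-> -> ->] := CML_coeffs_uniq pd2 kI cml (cml2 k kI); exact: cml1.
Qed.

Lemma reciprocal_coefE C (k : idx) : symmetric_cov C -> interior k ->
  [/\ R0 C k = prec C k k, Rplus C k = - prec C k (inord k.+1)
    & Rminus C k = - prec C k (prev_idx k)].
Proof.
move=> symC /andP [k0 _]; rewrite /R0 /Rplus /Rminus /Ablk /Bblk inord_val.
by rewrite (trmx_prec symC (prev_idx k) k) prednK // inord_val.
Qed.

Lemma same_reciprocal_modelE C1 C2 :
  symmetric_cov C1 -> symmetric_cov C2 -> posdef_cov C1 -> posdef_cov C2 ->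
  reciprocal C1 -> reciprocal C2 ->
  same_reciprocal_model C1 C2 <->
  forall k, interior k -> forall j, prec C1 k j = prec C2 k j.
Proof.
move=> sym1 sym2 pd1 pd2 rec1 rec2; split=> [same k kI j|same n].
  have [] := same k; first by rewrite -interiorE.
  have [-> -> ->] := reciprocal_coefE sym1 kI; have [-> -> ->] := reciprocal_coefE sym2 kI.
  move=> e0 /oppr_inj e1 /oppr_inj e2; have /andP [_ kN] := kI.
  have [->|jk] := eqVneq j k; first exact: e0.
  have [jn|jn] := eqVneq (j : nat) k.+1.
    by rewrite (_ : j = inord k.+1) //; apply: ord_inj; rewrite inordK ?ltnS.
  have [jp|jp] := eqVneq (j : nat) k.-1.
    by rewrite (_ : j = prev_idx k) //; apply: ord_inj; rewrite prev_idxE.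
  by rewrite !prec_tridiag.
move=> nI; have nN : (n < N.+1)%N by move: nI; lia.
have kI : interior (inord n) by rewrite interiorE inordK.
rewrite -(inordK nN).
have [-> -> ->] := reciprocal_coefE sym1 kI; have [-> -> ->] := reciprocal_coefE sym2 kI.
by rewrite !same.
Qed.

End BlockCovariance.

Unset Implicit Arguments.

Theorem proposition5 (R : realFieldType) (d N : nat)
  (C1 C2 : 'I_N.+1 -> 'I_N.+1 -> 'M[R]_d) :
  nonsingular_gaussian_cov C1 -> nonsingular_gaussian_cov C2 ->
  reciprocal C1 -> reciprocal C2 ->
  (same_reciprocal_model C1 C2 <-> same_CML_model C1 C2).
Proof.
move=> /nonsingular_gaussian_posdef [sym1 pd1] /nonsingular_gaussian_posdef [sym2 pd2].
move=> rec1 rec2; have [g1 [g2 [gk cml1]]] := exists_CML_model pd1 rec1.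
have gk_ok := CML_cov_unit_sym pd1 sym1 cml1.
have prec1 := (CML_modelE g1 g2 pd1 sym1 gk_ok).1 cml1.
apply: (iff_trans (same_reciprocal_modelE sym1 sym2 pd1 pd2 rec1 rec2)).
apply: (iff_trans _ (iff_sym (same_CML_modelE pd1 pd2 cml1))).
apply: (iff_trans _ (iff_sym (CML_modelE g1 g2 pd2 sym2 gk_ok))).
by split=> same k kI j; [rewrite -same // prec1 | rewrite same // prec1].
Qed.
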